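(* Let $\bm{\Pi}=\{\Pi_{\bm{x}}\}_{\bm{x}\in\{0,1\}^n}$ be a POVM on $(\mathbb{C}^2)^{\otimes n}$. Let $|\Phi_0\rangle=|+\rangle^{\otimes n}$ with $|+\rangle=(|0\rangle+|1\rangle)/\sqrt2$, $W=\frac{1}{2^n}\mathbb{1}-|\Phi_0\rangle\langle\Phi_0|$, and $\mathscr{Q}^{\theta=0}_\Phi(\bm{\Pi})=\frac{1}{2^n}\sum_{\bm{x}}2^n|\operatorname{tr}[W\Pi_{\bm{x}}]|$. Let $\mathcal{C}_{\ell_\infty}(\bm{\Pi})=\sum_{\bm{x}}\sum_{\bm{y}<\bm{z}}|\Pi_{\bm{x}}(\bm{y},\bm{z})|$. Then $$\mathcal{C}_{\ell_\infty}(\bm{\Pi})\ge 2^{n-1}\,\mathscr{Q}^{\theta=0}_\Phi(\bm{\Pi}).$$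
   Context: $\Pi(\bm{y},\bm{z})=\langle\bm{y}|\Pi|\bm{z}\rangle$ in the computational basis $\{|\bm{y}\rangle:\bm{y}\in\{0,1\}^n\}$; the sum over $\bm{y}<\bm{z}$ runs over pairs of distinct bit strings with respect to a fixed total order (each unordered pair once). *)

(* Complex scalars: an arbitrary numClosedFieldType C
   (e.g. algC, or complex R over a real closed field). *)
From HB Require Import structures.
From mathcomp Require Import all_boot all_order all_algebra.
Set Implicit Arguments. Unset Strict Implicit. Unset Printing Implicit Defensive.
Import Order.TTheory GRing.Theory Num.Theory.
Local Open Scope ring_scope.

Section Defs.
Variable C : numClosedFieldType.
Variable n : nat.

(* Computational basis of (C^2)^{⊗n} indexed by 'I_(2^n): the bit string y
   corresponds to the ordinal whose binary expansion is y. *)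
Notation N := (2 ^ n)%N.

Definition hermitian (A : 'M[C]_N) : Prop :=
  forall i j, A j i = (A i j)^*.

Definition psd (A : 'M[C]_N) : Prop :=
  hermitian A /\
  forall v : 'cV[C]_N, 0 <= \sum_(i < N) \sum_(j < N) (v i 0)^* * A i j * v j 0.

Definition povm (P : 'I_N -> 'M[C]_N) : Prop :=
  (forall x, psd (P x)) /\ \sum_(x < N) P x = 1%:M.

(* |Phi0><Phi0| with |Phi0> = |+>^{⊗n}: every entry equals 1/2^n *)
Definition Phi0proj : 'M[C]_N := \matrix_(i, j) (N%:R)^-1.

Definition Wmx : 'M[C]_N := (N%:R)^-1 *: 1%:M - Phi0proj.

Definition Qtheta0 (P : 'I_N -> 'M[C]_N) : C :=
  (N%:R)^-1 * \sum_(x < N) (N%:R * `| \tr (Wmx *m P x) |).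

Definition Clinf (P : 'I_N -> 'M[C]_N) : C :=
  \sum_(x < N) \sum_(y < N) \sum_(z < N | (y < z)%N) `| P x y z |.

End Defs.

(* Since W = (1 - J) / 2^n with J the all-ones matrix, 2^n tr[W A] is minus the
   sum of the off-diagonal entries of A.  By the triangle inequality its modulus
   is at most the sum of the moduli of these entries, which for Hermitian A is
   twice the sum over the strict upper triangle. *)
From Pilot Require Import Defs.
From mathcomp Require Import all_boot all_order all_algebra.
Import Order.TTheory GRing.Theory Num.Theory.
Local Open Scope ring_scope.

Lemma sum_offdiag_sym (V : nmodType) (m : nat) (f : 'I_m -> 'I_m -> V) :
  (forall i j, f i j = f j i) ->
  \sum_(i < m) \sum_(j < m | j != i) f i j
  = (\sum_(i < m) \sum_(j < m | (i < j)%N) f i j) *+ 2.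
Proof.
move=> f_sym.
have lower_upper : \sum_(i < m) \sum_(j < m | (j < i)%N) f i j
                 = \sum_(i < m) \sum_(j < m | (i < j)%N) f i j.
  rewrite (exchange_big_dep xpredT) //=.
  by apply: eq_bigr => i _; apply: eq_bigr => j _; rewrite f_sym.
rewrite mulr2n -{1}lower_upper -big_split /=.
apply: eq_bigr => i _; rewrite (bigID (fun j : 'I_m => (j < i)%N)) /=.
congr (_ + _); apply: eq_bigl => j.
  by rewrite andbC; apply: andb_idr => /ltn_eqF; rewrite -val_eqE /= => ->.
by rewrite -val_eqE /= -leqNgt ltn_neqAle eq_sym.
Qed.

Lemma sum_mx_diag_offdiag (V : nmodType) (m : nat) (A : 'M[V]_m) :
  \sum_i \sum_j A i j = \tr A + \sum_i \sum_(j | j != i) A i j.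
Proof. by rewrite -big_split; apply: eq_bigr => i _; rewrite (bigD1 i). Qed.

Lemma mxtrace_const_mul (R : pzSemiRingType) (m : nat) (c : R) (A : 'M[R]_m) :
  \tr (const_mx c *m A) = c * \sum_i \sum_j A i j.
Proof.
rewrite exchange_big mulr_sumr; apply: eq_bigr => i _.
by rewrite !mxE mulr_sumr; apply: eq_bigr => j _; rewrite mxE.
Qed.

Section Witness.
Variables (C : numClosedFieldType) (n : nat).
Local Notation N := (2 ^ n)%N.
Local Notation W := (@Wmx C n).

Lemma Phi0proj_const : @Phi0proj C n = const_mx (N%:R)^-1.
Proof. by apply/matrixP => i j; rewrite !mxE. Qed.

Lemma mxtrace_Wmx_mul (A : 'M[C]_N) :
  \tr (W *m A) = - ((N%:R)^-1 * \sum_i \sum_(j | j != i) A i j).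
Proof.
rewrite /Wmx mulmxBl -scalemxAl mul1mx raddfB /= mxtraceZ Phi0proj_const.
by rewrite mxtrace_const_mul sum_mx_diag_offdiag mulrDr opprD addrA subrr add0r.
Qed.

Lemma norm_mxtrace_Wmx_mul (A : 'M[C]_N) :
  Defs.hermitian A ->
  N%:R * `|\tr (W *m A)| <= (\sum_(i < N) \sum_(j < N | (i < j)%N) `|A i j|) *+ 2.
Proof.
move=> hA; have N_neq0 : N%:R != 0 :> C by rewrite pnatr_eq0 expn_eq0.
rewrite mxtrace_Wmx_mul normrN normrM normfV normr_nat mulrA mulfV // mul1r.
rewrite -(@sum_offdiag_sym _ _ (fun i j => `|A i j|)); last first.
  by move=> i j; rewrite hA norm_conjC.
apply: le_trans (ler_norm_sum _ _ _) _.
by apply: ler_sum => i _; apply: ler_norm_sum.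
Qed.

End Witness.

Theorem lemma4 (C : numClosedFieldType) (n : nat)
  (P : 'I_(2 ^ n) -> 'M[C]_(2 ^ n)) :
  povm P ->
  ((2 ^ n)%:R / 2) * Qtheta0 P <= Clinf P.
Proof.
move=> [psdP _].
have N_neq0 : (2 ^ n)%:R != 0 :> C by rewrite pnatr_eq0 expn_eq0.
rewrite /Qtheta0 /Clinf mulrAC mulrA mulfV // mul1r.
rewrite mulrC ler_pdivrMl ?ltr0n // mulr_sumr.
apply: ler_sum => x _; rewrite [X in _ <= X]mulr_natl.
exact: norm_mxtrace_Wmx_mul (psdP x).1.
Qed.
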